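(* Let $A$ be a sequence algebra and $X$ an algebraic (left) $A$-module such that for every $x\in X$, $\mathbf p^n\cdot x=0$ for all large $n$, and $\mathbf p^n\cdot x=0$ for all $n$ implies $x=0$. Suppose each $X_n:=\mathbf p^n\cdot X$ carries a norm $\|\cdot\|_n$. Let $M_X:=\{n:X_n\ne0\}$ and let $c_{00}^+(X)$ be the set of finitely supported nonnegative real sequences $\xi$ with $\xi_n=0$ for $n\notin M_X$. Let $f:c_{00}^+(X)\to\mathbb R$ satisfy: (i) $f(\xi)>0$ for $\xi\ne0$; (ii) $f(\lambda\xi)=\lambda f(\xi)$ for $\lambda>0$; (iii) $\xi\le\eta$ implies $f(\xi)\le f(\eta)$; (iv) $f(|a|\xi)\le\|a\|f(\xi)$ for $a\in A$, where $|a|\xi=(|a_n|\xi_n)_n$; (v) $f(\xi+\eta)\le f(\xi)+f(\eta)$. For $x\in X$ put $\|x\|:=f(\xi)$ with $\xi_n:=\|\mathbf p^n\cdot x\|_n$. Then $\|\cdot\|$ is a norm making $X$ a (contractive) normed homogeneous $A$-module. If in addition $f(\mathbf p^n)=1$ for all $n\in M_X$, then the restriction of $\|\cdot\|$ to each $X_n$ coincides with $\|\cdot\|_n$.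
   Context: A sequence algebra is a normed algebra of complex sequences with coordinatewise operations containing $c_{00}$ as a dense subalgebra, with $\|\mathbf p^n\|=1$, where $\mathbf p^n$ has $1$ in place $n$ and $0$ elsewhere; $f(0)$ is understood as $0$ (consistent with (ii)). A normed module is contractive if $\|a\cdot x\|\le\|a\|\|x\|$. A normed $A$-module is homogeneous if for $x,y$, $\|\mathbf p^n\cdot x\|\le\|\mathbf p^n\cdot y\|$ for all $n$ implies $\|x\|\le\|y\|$. *)

(* The complex field is modelled by an arbitrary
   C : numClosedFieldType; real-valued quantities (norms, f) are elements of C
   that are >= 0 (hence real). *)
From HB Require Import structures.
From mathcomp Require Import all_boot all_order all_algebra.
Set Implicit Arguments. Unset Strict Implicit. Unset Printing Implicit Defensive.
Import Order.TTheory GRing.Theory Num.Theory.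
Local Open Scope ring_scope.

Definition pseq (C : numClosedFieldType) (n : nat) : nat -> C :=
  fun k => if k == n then 1 else 0.

Definition finsupp (T : nmodType) (a : nat -> T) : Prop :=
  exists N : nat, forall k : nat, (N <= k)%N -> a k = 0.

Definition sequence_algebra (C : numClosedFieldType)
    (inA : (nat -> C) -> Prop) (nA : (nat -> C) -> C) : Prop :=
  (forall a, finsupp a -> inA a) /\
  (forall a b, inA a -> inA b -> inA (fun k => a k + b k)) /\
  (forall (l : C) a, inA a -> inA (fun k => l * a k)) /\
  (forall a b, inA a -> inA b -> inA (fun k => a k * b k)) /\
  (forall a, inA a -> 0 <= nA a) /\
  (forall a, inA a -> nA a = 0 -> forall k, a k = 0) /\
  (forall a b, inA a -> inA b -> nA (fun k => a k + b k) <= nA a + nA b) /\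
  (forall (l : C) a, inA a -> nA (fun k => l * a k) = `|l| * nA a) /\
  (forall a b, inA a -> inA b -> nA (fun k => a k * b k) <= nA a * nA b) /\
  (forall n, nA (pseq C n) = 1) /\
  (forall a, inA a -> forall e : C, 0 < e ->
     exists b, finsupp b /\ nA (fun k => a k - b k) < e).

Definition algebraic_module (C : numClosedFieldType) (X : lmodType C)
    (inA : (nat -> C) -> Prop) (act : (nat -> C) -> X -> X) : Prop :=
  (forall a b x, inA a -> inA b -> act (fun k => a k + b k) x = act a x + act b x) /\
  (forall a x y, inA a -> act a (x + y) = act a x + act a y) /\
  (forall a b x, inA a -> inA b -> act (fun k => a k * b k) x = act a (act b x)) /\
  (forall (l : C) a x, inA a -> act (fun k => l * a k) x = l *: act a x) /\
  (forall (l : C) a x, inA a -> act a (l *: x) = l *: act a x).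

Definition Xpart (C : numClosedFieldType) (X : lmodType C)
    (act : (nat -> C) -> X -> X) (n : nat) (x : X) : Prop :=
  exists y : X, x = act (pseq C n) y.

Definition norm_on (C : numClosedFieldType) (X : lmodType C)
    (P : X -> Prop) (N : X -> C) : Prop :=
  (forall x, P x -> 0 <= N x) /\
  (forall x, P x -> N x = 0 -> x = 0) /\
  (forall x y, P x -> P y -> N (x + y) <= N x + N y) /\
  (forall (l : C) x, P x -> N (l *: x) = `|l| * N x).

Definition MX (C : numClosedFieldType) (X : lmodType C)
    (act : (nat -> C) -> X -> X) (n : nat) : Prop :=
  exists x : X, act (pseq C n) x <> 0.

Definition c00plus (C : numClosedFieldType) (X : lmodType C)
    (act : (nat -> C) -> X -> X) (xi : nat -> C) : Prop :=
  (forall n, 0 <= xi n) /\ finsupp xi /\ (forall n, ~ MX act n -> xi n = 0).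

Definition normf (C : numClosedFieldType) (X : lmodType C)
    (act : (nat -> C) -> X -> X) (nX : nat -> X -> C)
    (f : (nat -> C) -> C) (x : X) : C :=
  f (fun n => nX n (act (pseq C n) x)).

(* Everything is read off the coordinate sequence ξ(x) = (‖p^n·x‖_n)_n.
   Since p^n·(a·x) = a_n p^n·x, we get ξ(a·x) = |a|ξ(x), ξ(λx) = |λ|ξ(x) and
   ξ(x + y) ≤ ξ(x) + ξ(y), so (ii)–(v) give the norm axioms and
   contractivity, while (i) and the separation hypothesis give definiteness.
   For x = p^n·y, ξ(x) = ‖x‖_n p^n, hence ‖x‖ = ‖x‖_n f(p^n): dividing by
   f(p^n) > 0 yields homogeneity, and f(p^n) = 1 yields the last claim. *)
From Stdlib Require Import Classical FunctionalExtensionality.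
From HB Require Import structures.
From mathcomp Require Import all_boot all_order all_algebra.
Set Implicit Arguments. Unset Strict Implicit. Unset Printing Implicit Defensive.
Import Order.TTheory GRing.Theory Num.Theory.
Local Open Scope ring_scope.

Section Pseq.
Variable C : numClosedFieldType.

Lemma pseq_finsupp (n : nat) : finsupp (pseq C n).
Proof.
exists n.+1 => k; rewrite /pseq; case: eqP => // ->.
by rewrite ltnn.
Qed.

Lemma sequence_algebra_pseq (inA : (nat -> C) -> Prop) (nA : (nat -> C) -> C)
    (n : nat) : sequence_algebra inA nA -> inA (pseq C n).
Proof. by case=> c00A _; apply/c00A/pseq_finsupp. Qed.

Lemma pseq_mulr (n : nat) (a : nat -> C) :
  (fun k => pseq C n k * a k) = (fun k => a n * pseq C n k).
Proof.
apply: functional_extensionality => k; rewrite /pseq.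
by case: eqP => [->|_]; rewrite ?mul1r ?mulr1 ?mul0r ?mulr0.
Qed.

End Pseq.

Lemma norm_on0 (C : numClosedFieldType) (X : lmodType C) (P : X -> Prop)
    (N : X -> C) : norm_on P N -> P 0 -> N 0 = 0.
Proof.
by case=> _ [_ [_ NZ]] P0; have := NZ 0 0 P0; rewrite scale0r normr0 mul0r.
Qed.

Section ModuleAction.
Variables (C : numClosedFieldType) (inA : (nat -> C) -> Prop) (X : lmodType C).
Variable act : (nat -> C) -> X -> X.
Hypothesis act_module : algebraic_module inA act.
Hypothesis inA_pseq : forall n, inA (pseq C n).

Lemma act0 (a : nat -> C) : inA a -> act a 0 = 0.
Proof.
move=> Aa; have [_ [_ [_ [_ actZr]]]] := act_module.
by have := actZr 0 a 0 Aa; rewrite !scale0r.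
Qed.

Lemma Xpart_act (n : nat) (x : X) : Xpart act n (act (pseq C n) x).
Proof. by exists x. Qed.

Lemma Xpart0 (n : nat) : Xpart act n 0.
Proof. by exists 0; rewrite act0. Qed.

Lemma act_pseq_act (n : nat) (a : nat -> C) (x : X) : inA a ->
  act (pseq C n) (act a x) = a n *: act (pseq C n) x.
Proof.
move=> Aa; have [_ [_ [actM [actZl _]]]] := act_module.
by rewrite -actM // pseq_mulr actZl.
Qed.

Lemma act_pseq_pseq (m n : nat) (x : X) :
  act (pseq C m) (act (pseq C n) x) = if m == n then act (pseq C m) x else 0.
Proof.
rewrite act_pseq_act // /pseq.
by case: (m == n); rewrite ?scale1r ?scale0r.
Qed.

Lemma act_pseq_notMX (n : nat) (x : X) : ~ MX act n -> act (pseq C n) x = 0.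
Proof.
move=> notM; case: (eqVneq (act (pseq C n) x) 0) => // nz.
by case: notM; exists x; apply/eqP.
Qed.

End ModuleAction.

Section C00plus.
Variables (C : numClosedFieldType) (X : lmodType C).
Variable act : (nat -> C) -> X -> X.

Lemma c00plus0 : c00plus act (fun _ => 0).
Proof. by split=> //; split=> //; exists 0%N. Qed.

Lemma c00plusZ (xi : nat -> C) (l : C) :
  c00plus act xi -> 0 <= l -> c00plus act (fun n => l * xi n).
Proof.
move=> [xi_ge0 [[N xiN] xiMX]] l_ge0; split; first by move=> n; rewrite mulr_ge0.
split; first by exists N => k kN; rewrite xiN ?mulr0.
by move=> n notM; rewrite xiMX ?mulr0.
Qed.

Lemma c00plusD (xi eta : nat -> C) : c00plus act xi -> c00plus act eta ->
  c00plus act (fun n => xi n + eta n).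
Proof.
move=> [xi_ge0 [[N xiN] xiMX]] [eta_ge0 [[M etaM] etaMX]].
split; first by move=> n; rewrite addr_ge0.
split; last by move=> n notM; rewrite xiMX ?etaMX ?addr0.
exists (maxn N M) => k; rewrite geq_max => /andP[kN kM].
by rewrite xiN ?etaM ?addr0.
Qed.

Lemma c00plus_pseq (n : nat) : MX act n -> c00plus act (pseq C n).
Proof.
move=> Mn; split; first by move=> k; rewrite /pseq; case: (k == n).
split; first exact: pseq_finsupp.
by move=> k notM; rewrite /pseq; case: eqP => // kn; case: notM; rewrite kn.
Qed.

End C00plus.

Section PositivelyHomogeneous.
Variables (C : numClosedFieldType) (X : lmodType C).
Variables (act : (nat -> C) -> X -> X) (f : (nat -> C) -> C).
Hypothesis f_pos : forall xi, c00plus act xi -> (exists n, xi n <> 0) -> 0 < f xi.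
Hypothesis f_homog : forall xi (l : C),
  c00plus act xi -> 0 < l -> f (fun n => l * xi n) = l * f xi.

Lemma f_zero : f (fun _ => 0) = 0.
Proof.
have := f_homog (c00plus0 act) (ltr0Sn C 1).
have -> : (fun _ : nat => 2 * 0) = (fun _ => 0 : C).
  by apply: functional_extensionality => n; rewrite mulr0.
rewrite mulr_natl mulr2n => f0D.
by apply: (addrI (f (fun _ => 0))); rewrite addr0 -f0D.
Qed.

Lemma f_ge0 (xi : nat -> C) : c00plus act xi -> 0 <= f xi.
Proof.
move=> xi_c00; have [nz|z] := classic (exists n, xi n <> 0).
  exact/ltW/f_pos.
have -> : xi = (fun _ => 0).
  by apply: functional_extensionality => n; apply: NNPP => nz; apply: z; exists n.
by rewrite f_zero.
Qed.

Lemma f_scale (xi : nat -> C) (l : C) :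
  c00plus act xi -> 0 <= l -> f (fun n => l * xi n) = l * f xi.
Proof.
move=> xi_c00; rewrite le_eqVlt => /orP[/eqP <-|l_gt0]; last exact: f_homog.
have -> : (fun n => 0 * xi n) = (fun _ => 0).
  by apply: functional_extensionality => n; rewrite mul0r.
by rewrite f_zero mul0r.
Qed.

End PositivelyHomogeneous.

Section InducedNorm.
Variables (C : numClosedFieldType) (inA : (nat -> C) -> Prop) (nA : (nat -> C) -> C).
Variables (X : lmodType C) (act : (nat -> C) -> X -> X).
Variables (nX : nat -> X -> C) (f : (nat -> C) -> C).
Hypothesis act_module : algebraic_module inA act.
Hypothesis inA_pseq : forall n, inA (pseq C n).
Hypothesis act_finsupp :
  forall x : X, exists N : nat, forall n, (N <= n)%N -> act (pseq C n) x = 0.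
Hypothesis act_sep : forall x : X, (forall n, act (pseq C n) x = 0) -> x = 0.
Hypothesis nX_norm : forall n, norm_on (Xpart act n) (nX n).
Hypothesis f_pos : forall xi, c00plus act xi -> (exists n, xi n <> 0) -> 0 < f xi.
Hypothesis f_homog : forall xi (l : C),
  c00plus act xi -> 0 < l -> f (fun n => l * xi n) = l * f xi.
Hypothesis f_mono : forall xi eta, c00plus act xi -> c00plus act eta ->
  (forall n, xi n <= eta n) -> f xi <= f eta.
Hypothesis f_contr : forall a xi, inA a -> c00plus act xi ->
  f (fun n => `|a n| * xi n) <= nA a * f xi.
Hypothesis f_subadd : forall xi eta, c00plus act xi -> c00plus act eta ->
  f (fun n => xi n + eta n) <= f xi + f eta.

Local Notation nrm := (normf act nX f).

Lemma nX0 (n : nat) : nX n 0 = 0.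
Proof. exact: norm_on0 (nX_norm n) (Xpart0 act_module inA_pseq n). Qed.

Lemma nX_ge0 (n : nat) (x : X) : 0 <= nX n (act (pseq C n) x).
Proof. by have [nX_ge0 _] := nX_norm n; apply/nX_ge0/Xpart_act. Qed.

Lemma c00plus_coords (x : X) : c00plus act (fun n => nX n (act (pseq C n) x)).
Proof.
split; first by move=> n; apply: nX_ge0.
split; last by move=> n notM; rewrite act_pseq_notMX // nX0.
by have [N xN] := act_finsupp x; exists N => k kN; rewrite xN // nX0.
Qed.

Lemma coords_act (a : nat -> C) (x : X) : inA a ->
  (fun n => nX n (act (pseq C n) (act a x))) =
  (fun n => `|a n| * nX n (act (pseq C n) x)).
Proof.
move=> Aa; apply: functional_extensionality => n.
have [_ [_ [_ nXZ]]] := nX_norm n.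
by rewrite (act_pseq_act act_module) // nXZ //; apply: Xpart_act.
Qed.

Lemma coordsZ (l : C) (x : X) :
  (fun n => nX n (act (pseq C n) (l *: x))) =
  (fun n => `|l| * nX n (act (pseq C n) x)).
Proof.
apply: functional_extensionality => n.
have [_ [_ [_ nXZ]]] := nX_norm n; have [_ [_ [_ [_ actZr]]]] := act_module.
by rewrite actZr // nXZ //; apply: Xpart_act.
Qed.

Lemma coordsD (x y : X) (n : nat) :
  nX n (act (pseq C n) (x + y)) <=
  nX n (act (pseq C n) x) + nX n (act (pseq C n) y).
Proof.
have [_ [_ [nXD _]]] := nX_norm n; have [_ [actDr _]] := act_module.
by rewrite actDr // nXD //; apply: Xpart_act.
Qed.

Lemma normf_act_pseq (n : nat) (x : X) :
  nrm (act (pseq C n) x) = nX n (act (pseq C n) x) * f (pseq C n).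
Proof.
rewrite /normf.
have -> : (fun m => nX m (act (pseq C m) (act (pseq C n) x))) =
          (fun m => nX n (act (pseq C n) x) * pseq C n m).
  apply: functional_extensionality => m.
  rewrite (act_pseq_pseq act_module inA_pseq) /pseq.
  by case: eqP => [->|_]; rewrite ?mulr1 ?nX0 ?mulr0.
have [Mn|notM] := classic (MX act n).
  exact/(f_scale f_homog)/nX_ge0/c00plus_pseq.
rewrite act_pseq_notMX // nX0 mul0r.
have -> : (fun m => 0 * pseq C n m) = (fun _ => 0).
  by apply: functional_extensionality => m; rewrite mul0r.
exact: f_zero f_homog.
Qed.

Lemma normf_ge0 (x : X) : 0 <= nrm x.
Proof. exact/(f_ge0 f_pos f_homog)/c00plus_coords. Qed.

Lemma normf_eq0 (x : X) : nrm x = 0 -> x = 0.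
Proof.
move=> x0; apply: act_sep => n; case: (eqVneq (act (pseq C n) x) 0) => // nz.
have [_ [nX_def _]] := nX_norm n.
have : 0 < nrm x.
  apply: f_pos; first exact: c00plus_coords.
  by exists n => nXx0; move/eqP: nz; apply; apply: nX_def nXx0; apply: Xpart_act.
by rewrite x0 ltxx.
Qed.

Lemma normfD (x y : X) : nrm (x + y) <= nrm x + nrm y.
Proof.
have [cx cy] := (c00plus_coords x, c00plus_coords y).
apply: le_trans (f_subadd cx cy).
by apply: f_mono; [exact: c00plus_coords | exact: c00plusD cx cy | exact: coordsD].
Qed.

Lemma normfZ (l : C) (x : X) : nrm (l *: x) = `|l| * nrm x.
Proof. by rewrite /normf coordsZ (f_scale f_homog) //; exact: c00plus_coords. Qed.

Lemma normf_act (a : nat -> C) (x : X) : inA a -> nrm (act a x) <= nA a * nrm x.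
Proof. by move=> Aa; rewrite /normf coords_act //; apply/f_contr/c00plus_coords. Qed.

Lemma normf_homogeneous (x y : X) :
  (forall n, nrm (act (pseq C n) x) <= nrm (act (pseq C n) y)) -> nrm x <= nrm y.
Proof.
move=> le_xy; apply: f_mono; [exact: c00plus_coords.. | move=> n].
have := le_xy n; rewrite !normf_act_pseq.
have [Mn|notM] := classic (MX act n); last by rewrite !act_pseq_notMX // nX0.
rewrite ler_pM2r //; apply: f_pos; first exact: c00plus_pseq.
by exists n; rewrite /pseq eqxx; apply/eqP; rewrite oner_eq0.
Qed.

Lemma normf_Xpart : (forall n, MX act n -> f (pseq C n) = 1) ->
  forall (n : nat) (x : X), Xpart act n x -> nrm x = nX n x.
Proof.
move=> f_pseq n _ [y ->]; rewrite normf_act_pseq.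
have [Mn|notM] := classic (MX act n); first by rewrite f_pseq // mulr1.
by rewrite act_pseq_notMX // nX0 mul0r.
Qed.

End InducedNorm.

Theorem proposition1p9 (C : numClosedFieldType)
    (inA : (nat -> C) -> Prop) (nA : (nat -> C) -> C)
    (X : lmodType C) (act : (nat -> C) -> X -> X)
    (nX : nat -> X -> C) (f : (nat -> C) -> C) :
  sequence_algebra inA nA ->
  algebraic_module inA act ->
  (forall x : X, exists N : nat, forall n, (N <= n)%N -> act (pseq C n) x = 0) ->
  (forall x : X, (forall n, act (pseq C n) x = 0) -> x = 0) ->
  (forall n, norm_on (Xpart act n) (nX n)) ->
  (* (i) *)
  (forall xi, c00plus act xi -> (exists n, xi n <> 0) -> 0 < f xi) ->
  (* (ii) *)
  (forall xi (l : C), c00plus act xi -> 0 < l -> f (fun n => l * xi n) = l * f xi) ->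
  (* (iii) *)
  (forall xi eta, c00plus act xi -> c00plus act eta ->
     (forall n, xi n <= eta n) -> f xi <= f eta) ->
  (* (iv) *)
  (forall a xi, inA a -> c00plus act xi ->
     f (fun n => `|a n| * xi n) <= nA a * f xi) ->
  (* (v) *)
  (forall xi eta, c00plus act xi -> c00plus act eta ->
     f (fun n => xi n + eta n) <= f xi + f eta) ->
  (* ||.|| is a norm on X *)
  ((forall x : X, 0 <= normf act nX f x) /\
   (forall x : X, normf act nX f x = 0 -> x = 0) /\
   (forall x y : X, normf act nX f (x + y) <= normf act nX f x + normf act nX f y) /\
   (forall (l : C) (x : X), normf act nX f (l *: x) = `|l| * normf act nX f x) /\
   (* contractive *)
   (forall a (x : X), inA a -> normf act nX f (act a x) <= nA a * normf act nX f x) /\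
   (* homogeneous *)
   (forall x y : X,
      (forall n, normf act nX f (act (pseq C n) x) <= normf act nX f (act (pseq C n) y)) ->
      normf act nX f x <= normf act nX f y)) /\
  ((forall n, MX act n -> f (pseq C n) = 1) ->
   forall n (x : X), Xpart act n x -> normf act nX f x = nX n x).
Proof.
move=> A_seq act_module act_finsupp act_sep nX_norm f_pos f_homog f_mono f_contr
  f_subadd.
have inA_pseq n : inA (pseq C n) by exact: sequence_algebra_pseq A_seq.
split; last exact: normf_Xpart act_module inA_pseq nX_norm f_homog.
split; first exact: normf_ge0 act_module inA_pseq act_finsupp nX_norm f_pos f_homog.
split; first exact: normf_eq0 act_module inA_pseq act_finsupp act_sep nX_norm f_pos.
split; first exact: normfD act_module inA_pseq act_finsupp nX_norm f_mono f_subadd.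
split; first exact: normfZ act_module inA_pseq act_finsupp nX_norm f_homog.
split; first exact: normf_act act_module inA_pseq act_finsupp nX_norm f_contr.
exact: normf_homogeneous act_module inA_pseq act_finsupp nX_norm f_pos f_homog f_mono.
Qed.
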